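(* Let $n \ge 1$, let $\mathbf{W}_1, \mathbf{W}_2 \in \mathbb{R}^{n\times n}$, let $\mathbf{x}, \mathbf{y} \in \mathbb{R}^n$, and let $p \in [0,1]$ with $p \neq \tfrac12$. Define $$L_p^{AID} = \mathbb{E}\big[\|\mathbf{W}_2\, \mathrm{AID}_p(\mathbf{W}_1\mathbf{x}) - \mathbf{y}\|_2^2\big],\qquad L_p = \|\mathbf{W}_2\, r_p(\mathbf{W}_1\mathbf{x}) - \mathbf{y}\|_2^2,$$ $$R_p = \Big\|\mathbf{W}_2\big(\tfrac12 \mathbf{W}_1\mathbf{x}\big) - \mathbf{W}_2\, r_p(\mathbf{W}_1\mathbf{x})\Big\|_2^2,$$ where the expectation is over the randomness of $\mathrm{AID}_p$. Then $$L_p^{AID} \ge L_p + \frac{4p(1-p)}{n(2p-1)^2}\, R_p.$$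
   Context: For $\mathbf{v} = (v_1,\dots,v_n)\in\mathbb{R}^n$, $\mathrm{AID}_p(\mathbf{v})$ is the random vector with coordinates $\mathrm{AID}_p(\mathbf{v})_i = p_i v_i$ if $v_i \ge 0$ and $(1-p_i)v_i$ if $v_i<0$, where $p_1,\dots,p_n$ are independent $\mathrm{Bernoulli}(p)$ random variables (equivalently, dropout with rate $1-p$ on nonnegative entries and rate $p$ on negative entries, without rescaling). The modified leaky ReLU $r_p$ acts coordinatewise by $r_p(x) = \tfrac12 x + (p - \tfrac12)|x|$, i.e. $r_p(x) = p x$ for $x\ge 0$ and $(1-p)x$ for $x<0$ (this is the mean of $\mathrm{AID}_p$). $\|\cdot\|_2$ is the Euclidean norm. *)

From HB Require Import structures.
From mathcomp Require Import all_boot all_order all_algebra.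
Set Implicit Arguments. Unset Strict Implicit. Unset Printing Implicit Defensive.
Import Order.TTheory GRing.Theory Num.Theory.
Local Open Scope ring_scope.

Section AID.
Variable R : realFieldType.
Variable n : nat.

Definition norm2sq (v : 'cV[R]_n) : R := \sum_(i < n) (v i 0) ^+ 2.

Definition rp (p x : R) : R := if 0 <= x then p * x else (1 - p) * x.
Definition rp_vec (p : R) (v : 'cV[R]_n) : 'cV[R]_n := \col_i rp p (v i 0).

(* AID_p(v) for a given outcome b of the Bernoulli vector (b i = true <-> p_i = 1) *)
Definition AID_outcome (b : {ffun 'I_n -> bool}) (v : 'cV[R]_n) : 'cV[R]_n :=
  \col_i (if 0 <= v i 0 then (b i)%:R * v i 0 else (1 - (b i)%:R) * v i 0).

(* probability of the outcome b when p_1..p_n are independent Bernoulli(p) *)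
Definition bern_weight (p : R) (b : {ffun 'I_n -> bool}) : R :=
  \prod_(i < n) (if b i then p else 1 - p).

Definition E_AID (p : R) (v : 'cV[R]_n) (F : 'cV[R]_n -> R) : R :=
  \sum_(b : {ffun 'I_n -> bool}) bern_weight p b * F (AID_outcome b v).

Definition L_AID (p : R) (W1 W2 : 'M[R]_n) (x y : 'cV[R]_n) : R :=
  E_AID p (W1 *m x) (fun z => norm2sq (W2 *m z - y)).

Definition L_p (p : R) (W1 W2 : 'M[R]_n) (x y : 'cV[R]_n) : R :=
  norm2sq (W2 *m rp_vec p (W1 *m x) - y).

Definition R_p (p : R) (W1 W2 : 'M[R]_n) (x : 'cV[R]_n) : R :=
  norm2sq (W2 *m ((1/2 : R) *: (W1 *m x)) - W2 *m rp_vec p (W1 *m x)).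
End AID.

(* Each coordinate of AID_p(v) is an independent two-point variable with mean
   r_p(v_i) and variance p(1-p) v_i^2, so the bias-variance decomposition gives
   L^AID_p = L_p + p(1-p) S with S = sum_k sum_i (W2_ki v_i)^2.  On the other hand
   v_i/2 - r_p(v_i) = +-(p - 1/2) v_i, so Cauchy-Schwarz over the n summands of
   each row gives R_p <= n (p - 1/2)^2 S. *)
From HB Require Import structures.
From mathcomp Require Import all_boot all_order all_algebra.
From mathcomp Require Import ring lra.
Set Implicit Arguments. Unset Strict Implicit.
Import Order.TTheory GRing.Theory Num.Theory.
Local Open Scope ring_scope.

Lemma big_pred2 (R : Type) (idx : R) (op : Monoid.com_law idx) (I : finType)
    (i j : I) (F : I -> R) :
  i != j -> \big[op/idx]_(k | (k == i) || (k == j)) F k = op (F i) (F j).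
Proof.
move=> neq_ij; rewrite (bigD1 i) ?eqxx //=; congr (op _ _).
rewrite -(big_pred1_eq op j F); apply: eq_bigl => k /=.
by case: (eqVneq k i) => [->|]; rewrite ?(negbTE neq_ij) ?andbT.
Qed.

Section BernoulliExpectation.
Variables (R : realFieldType) (n : nat) (p : R).

Definition bern_mean (f : bool -> R) : R := p * f true + (1 - p) * f false.

Definition expect_bern (F : {ffun 'I_n -> bool} -> R) : R :=
  \sum_b bern_weight p b * F b.

Lemma bern_mean_cst (c : R) : bern_mean (fun=> c) = c.
Proof. by rewrite /bern_mean; ring. Qed.

Lemma eq_expect_bern {F G : {ffun 'I_n -> bool} -> R} :
  F =1 G -> expect_bern F = expect_bern G.
Proof. by move=> eqFG; apply: eq_bigr => b _; rewrite eqFG. Qed.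

Lemma expect_bernD (F G : {ffun 'I_n -> bool} -> R) :
  expect_bern (fun b => F b + G b) = expect_bern F + expect_bern G.
Proof. by rewrite -big_split; apply: eq_bigr => b _; rewrite mulrDr. Qed.

Lemma expect_bernZ (c : R) (F : {ffun 'I_n -> bool} -> R) :
  expect_bern (fun b => c * F b) = c * expect_bern F.
Proof. by rewrite mulr_sumr; apply: eq_bigr => b _; rewrite mulrCA. Qed.

Lemma expect_bern_sum (I : Type) (r : seq I) (P : pred I)
    (F : I -> {ffun 'I_n -> bool} -> R) :
  expect_bern (fun b => \sum_(i <- r | P i) F i b)
  = \sum_(i <- r | P i) expect_bern (F i).
Proof.
rewrite /expect_bern; under eq_bigr do rewrite mulr_sumr.
exact: exchange_big.
Qed.

(* Independence of the coordinates: [bern_weight p b] factorises over [i]. *)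
Lemma expect_bern_prod (h : 'I_n -> bool -> R) :
  expect_bern (fun b => \prod_i h i (b i)) = \prod_i bern_mean (h i).
Proof.
have -> : \prod_i bern_mean (h i) = \prod_i \sum_x (if x then p else 1 - p) * h i x.
  by apply: eq_bigr => i _; rewrite big_bool.
rewrite bigA_distr_bigA; apply: eq_bigr => b _.
by rewrite /bern_weight -big_split.
Qed.

Lemma expect_bern_prod_cond (P : pred 'I_n) (h : 'I_n -> bool -> R) :
  expect_bern (fun b => \prod_(i | P i) h i (b i)) = \prod_(i | P i) bern_mean (h i).
Proof.
have := expect_bern_prod (fun i => if P i then h i else fun=> 1).
under [RHS]eq_bigr => i _ do rewrite (fun_if bern_mean) bern_mean_cst.
rewrite -big_mkcond => <-; apply: eq_expect_bern => b.
by rewrite big_mkcond; apply: eq_bigr => i _; rewrite if_arg.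
Qed.

Lemma expect_bern_cst (c : R) : expect_bern (fun=> c) = c.
Proof.
have := expect_bern_prod_cond pred0 (fun _ _ => 1).
rewrite !big_pred0 // => expect_bern1.
rewrite -[RHS]mulr1 -expect_bern1 -expect_bernZ.
by apply: eq_expect_bern => b; rewrite mulr1.
Qed.

Lemma expect_bern_coord (i : 'I_n) (f : bool -> R) :
  expect_bern (fun b => f (b i)) = bern_mean f.
Proof.
have := expect_bern_prod_cond (pred1 i) (fun _ => f).
rewrite big_pred1_eq => <-; apply: eq_expect_bern => b.
by rewrite big_pred1_eq.
Qed.

Lemma expect_bern_coord2 (i j : 'I_n) (f g : bool -> R) : i != j ->
  expect_bern (fun b => f (b i) * g (b j)) = bern_mean f * bern_mean g.
Proof.
move=> neq_ij; pose h k := if k == i then f else g.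
have := expect_bern_prod_cond [pred k | (k == i) || (k == j)] h.
rewrite big_pred2 // /h eqxx eq_sym (negbTE neq_ij) => <-.
by apply: eq_expect_bern => b; rewrite big_pred2 // /h eqxx eq_sym (negbTE neq_ij).
Qed.

Lemma bern_mean_center (f : bool -> R) : bern_mean (fun x => f x - bern_mean f) = 0.
Proof. by rewrite /bern_mean; ring. Qed.

Lemma bern_mean_sqr_center (f : bool -> R) :
  bern_mean (fun x => (f x - bern_mean f) ^+ 2) = p * (1 - p) * (f true - f false) ^+ 2.
Proof. by rewrite /bern_mean; ring. Qed.

Lemma expect_bern_cov (z : 'I_n -> bool -> R) (i j : 'I_n) :
  expect_bern (fun b => (z i (b i) - bern_mean (z i)) * (z j (b j) - bern_mean (z j)))
  = if i == j then p * (1 - p) * (z i true - z i false) ^+ 2 else 0.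
Proof.
case: eqVneq => [<- | neq_ij]; last first.
  by rewrite (expect_bern_coord2 (fun x => z i x - _) (fun x => z j x - _) neq_ij)
    bern_mean_center mul0r.
rewrite -bern_mean_sqr_center -[bern_mean (fun x => _ ^+ 2)](expect_bern_coord i).
by apply: eq_expect_bern => b; rewrite expr2.
Qed.

Lemma expect_bern_sqr_affine (a : 'I_n -> R) (z : 'I_n -> bool -> R) (c : R) :
  expect_bern (fun b => (\sum_i a i * z i (b i) - c) ^+ 2)
  = (\sum_i a i * bern_mean (z i) - c) ^+ 2
    + p * (1 - p) * \sum_i (a i * (z i true - z i false)) ^+ 2.
Proof.
pose d i (b : {ffun 'I_n -> bool}) := z i (b i) - bern_mean (z i).
set A := \sum_i a i * bern_mean (z i) - c.
have expand (b : {ffun 'I_n -> bool}) : (\sum_i a i * z i (b i) - c) ^+ 2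
    = A ^+ 2 + 2 * A * \sum_i a i * d i b
      + \sum_i \sum_j a i * a j * (d i b * d j b).
  have -> : \sum_i a i * z i (b i) - c = A + \sum_i a i * d i b.
    rewrite /A /d /=; under [X in _ = _ + X]eq_bigr do rewrite mulrBr.
    by rewrite sumrB; ring.
  have -> : \sum_i \sum_j a i * a j * (d i b * d j b) = (\sum_i a i * d i b) ^+ 2.
    rewrite expr2 mulr_suml; apply: eq_bigr => i _; rewrite mulr_sumr.
    by apply: eq_bigr => j _ /=; ring.
  by ring.
rewrite (eq_expect_bern expand) !expect_bernD expect_bern_cst expect_bernZ.
rewrite !expect_bern_sum.
under eq_bigr => i _ do
  rewrite expect_bernZ (expect_bern_coord i (fun x => z i x - _)) bern_mean_center mulr0.
rewrite big1 // mulr0 addr0; congr (_ + _).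
rewrite mulr_sumr; apply: eq_bigr => i _.
rewrite expect_bern_sum.
under eq_bigr => j _ do rewrite expect_bernZ (expect_bern_cov z i j).
rewrite (bigD1 i) //= eqxx big1 ?addr0; first by ring.
by move=> j; rewrite eq_sym => /negbTE ->; rewrite mulr0.
Qed.

End BernoulliExpectation.

Lemma sqr_sum_le_card (R : realFieldType) (n : nat) (a : 'I_n -> R) :
  (\sum_i a i) ^+ 2 <= n%:R * \sum_i a i ^+ 2.
Proof.
have sum_sqr_diff : \sum_i \sum_j (a i - a j) ^+ 2
    = 2 * (n%:R * \sum_i a i ^+ 2 - (\sum_i a i) ^+ 2).
  have -> : (\sum_i a i) ^+ 2 = \sum_i \sum_j a i * a j.
    by rewrite expr2 mulr_suml; under eq_bigr do rewrite mulr_sumr.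
  transitivity (\sum_(i < n) \sum_(j < n) a i ^+ 2 + \sum_(i < n) \sum_(j < n) a j ^+ 2
                - 2 * \sum_i \sum_j a i * a j).
    rewrite mulr_sumr -big_split -sumrB; apply: eq_bigr => i _.
    by rewrite mulr_sumr -big_split -sumrB; apply: eq_bigr => j _ /=; ring.
  under eq_bigr do rewrite sumr_const card_ord.
  by rewrite sumr_const card_ord sumrMnl -mulr_natl; ring.
have : 0 <= \sum_i \sum_j (a i - a j) ^+ 2.
  by apply: sumr_ge0 => i _; apply: sumr_ge0 => j _; exact: sqr_ge0.
by rewrite sum_sqr_diff pmulr_rge0 // subr_ge0.
Qed.

Section AIDLoss.
Variables (R : realFieldType) (n : nat).

Definition aid_coord (v : 'cV[R]_n) (i : 'I_n) (x : bool) : R :=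
  if 0 <= v i 0 then x%:R * v i 0 else (1 - x%:R) * v i 0.

Lemma AID_outcomeE (b : {ffun 'I_n -> bool}) (v : 'cV[R]_n) (i : 'I_n) :
  AID_outcome b v i 0 = aid_coord v i (b i).
Proof. by rewrite mxE. Qed.

Lemma bern_mean_aid_coord (p : R) (v : 'cV[R]_n) (i : 'I_n) :
  bern_mean p (aid_coord v i) = rp p (v i 0).
Proof. by rewrite /bern_mean /aid_coord /rp; case: ifP => _ /=; ring. Qed.

Lemma sqr_aid_coord_diff (v : 'cV[R]_n) (i : 'I_n) :
  (aid_coord v i true - aid_coord v i false) ^+ 2 = v i 0 ^+ 2.
Proof. by rewrite /aid_coord; case: ifP => _ /=; ring. Qed.

Lemma sqr_half_sub_rp (p t : R) :
  ((1 / 2) * t - rp p t) ^+ 2 = ((2 * p - 1) / 2) ^+ 2 * t ^+ 2.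
Proof. by rewrite /rp; case: ifP => _; field. Qed.

Lemma mulmxBE (W : 'M[R]_n) (u y : 'cV[R]_n) (k : 'I_n) :
  (W *m u - y) k 0 = \sum_i W k i * u i 0 - y k 0.
Proof. by rewrite !mxE. Qed.

Lemma L_AID_bias_variance (p : R) (W1 W2 : 'M[R]_n) (x y : 'cV[R]_n) :
  L_AID p W1 W2 x y = L_p p W1 W2 x y
    + p * (1 - p) * \sum_k \sum_i (W2 k i * (W1 *m x) i 0) ^+ 2.
Proof.
rewrite /L_p /norm2sq mulr_sumr -big_split /=.
rewrite -[L_AID _ _ _ _ _]/(expect_bern p (fun b => \sum_k _)) expect_bern_sum.
apply: eq_bigr => k _; set v := W1 *m x.
transitivity (expect_bern p
    (fun b => (\sum_i W2 k i * aid_coord v i (b i) - y k 0) ^+ 2)).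
  by apply: eq_expect_bern => b; rewrite mulmxBE; under eq_bigr do rewrite AID_outcomeE.
rewrite expect_bern_sqr_affine mulmxBE.
congr (_ ^+ 2 + _ * _); [congr (_ - _) |]; apply: eq_bigr => i _.
  by rewrite bern_mean_aid_coord /rp_vec mxE.
by rewrite exprMn sqr_aid_coord_diff -exprMn.
Qed.

Lemma R_p_le (p : R) (W1 W2 : 'M[R]_n) (x : 'cV[R]_n) :
  R_p p W1 W2 x
  <= n%:R * ((2 * p - 1) / 2) ^+ 2 * \sum_k \sum_i (W2 k i * (W1 *m x) i 0) ^+ 2.
Proof.
rewrite /R_p /norm2sq mulr_sumr; apply: ler_sum => k _; set v := W1 *m x.
have -> : (W2 *m ((1 / 2) *: v) - W2 *m rp_vec p v) k 0
    = \sum_i W2 k i * ((1 / 2) * v i 0 - rp p (v i 0)).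
  by rewrite !mxE -sumrB; apply: eq_bigr => i _; rewrite !mxE mulrBr.
apply: le_trans (sqr_sum_le_card _) _.
rewrite -mulrA ler_wpM2l // mulr_sumr; apply: ler_sum => i _.
by rewrite exprMn sqr_half_sub_rp mulrCA -exprMn.
Qed.

End AIDLoss.

Theorem theorem1 (R : realFieldType) (n : nat) (W1 W2 : 'M[R]_n)
    (x y : 'cV[R]_n) (p : R) :
  (0 < n)%N -> 0 <= p <= 1 -> p != 1/2 ->
  L_AID p W1 W2 x y >=
    L_p p W1 W2 x y
    + (4 * p * (1 - p)) / (n%:R * (2 * p - 1) ^+ 2) * R_p p W1 W2 x.
Proof.
move=> n_gt0 /andP[p_ge0 p_le1] p_neq_half.
rewrite L_AID_bias_variance lerD2l.
have n_neq0 : n%:R != 0 :> R by rewrite pnatr_eq0 -lt0n.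
have two_p_sub1_neq0 : 2 * p - 1 != 0.
  by apply: contra p_neq_half => /eqP p_half; apply/eqP; lra.
have coef_ge0 : 0 <= 4 * p * (1 - p) / (n%:R * (2 * p - 1) ^+ 2).
  apply: divr_ge0; last by rewrite mulr_ge0 ?ler0n ?sqr_ge0.
  by rewrite !mulr_ge0 //; lra.
set S := \sum_k _.
have -> : p * (1 - p) * S = 4 * p * (1 - p) / (n%:R * (2 * p - 1) ^+ 2)
                            * (n%:R * ((2 * p - 1) / 2) ^+ 2 * S).
  by field; rewrite n_neq0 two_p_sub1_neq0.
exact: ler_wpM2l coef_ge0 _ _ (R_p_le p W1 W2 x).
Qed.
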